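(* Let $a,b,c>0$ and let $d,e$ be real numbers, not in $\{0,-1,-2,\dots\}$, such that $de\ge 2abc$ and $$d+e\ \ge\ \max\Big\{a+b+c,\ \tfrac12\big(ab+bc+ac+2(a+b+c)-1-2abc\big),\ 2(ab+bc+ac)-3abc\Big\}.$$ Then $f(z)=z\,{}_3F_2(a,b,c;d,e;z)$ is close-to-convex in $\mathbb{D}$ with respect to $-\log(1-z)$.
   Context: $\mathbb{D}=\{z\in\mathbb{C}:|z|<1\}$. For $x\in\mathbb{C}$, $(x)_0=1$ and $(x)_n=x(x+1)\cdots(x+n-1)$ for $n\ge1$. The Clausen hypergeometric function is ${}_3F_2(a,b,c;d,e;z)=\sum_{n=0}^\infty \frac{(a)_n(b)_n(c)_n}{(d)_n(e)_n(1)_n}z^n$ for $|z|<1$ (with $d,e\notin\{0,-1,-2,\dots\}$). A normalized analytic function $f$ on $\mathbb{D}$ ($f(0)=0$, $f'(0)=1$) is close-to-convex with respect to a convex univalent function $g$ on $\mathbb{D}$ if $f$ is univalent on $\mathbb{D}$ and $\operatorname{Re}\big(f'(z)/g'(z)\big)>0$ for all $z\in\mathbb{D}$. Here $g(z)=-\log(1-z)$, which is convex univalent on $\mathbb{D}$, with $g'(z)=1/(1-z)$. *)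

From Stdlib Require Import Reals Factorial.
From Coquelicot Require Import Coquelicot.
Open Scope R_scope.

Fixpoint poch (x : R) (n : nat) : R :=
  match n with
  | O => 1
  | S m => poch x m * (x + INR m)
  end.

Definition inD (z : C) : Prop := Cmod z < 1.

(* Sum of a complex series, computed componentwise (equals the sum whenever
   the series converges). *)
Definition CSeries (u : nat -> C) : C :=
  (Series (fun n => Re (u n)), Series (fun n => Im (u n))).

Definition F32_term (a b c d e : R) (z : C) (n : nat) : C :=
  Cmult (RtoC (poch a n * poch b n * poch c n
               / (poch d n * poch e n * INR (fact n))))
        (Cpow z n).

Definition F32 (a b c d e : R) (z : C) : C := CSeries (F32_term a b c d e z).

(* g(z) = -log(1 - z), principal branch (Re(1-z) > 0 on the disk). *)
Definition neglog1m (z : C) : C :=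
  let w := Cminus (RtoC 1) z in
  (- ln (Cmod w), - atan (Im w / Re w)).

Definition Cderiv_at (f : C -> C) (z l : C) : Prop :=
  @is_derive C_AbsRing C_NormedModule f z l.

Definition close_to_convex_wrt (f g : C -> C) : Prop :=
  (forall z, inD z -> exists l, Cderiv_at f z l) /\
  f (RtoC 0) = RtoC 0 /\ Cderiv_at f (RtoC 0) (RtoC 1) /\
  (forall z w, inD z -> inD w -> f z = f w -> z = w) /\
  (forall z, inD z -> forall f' g', Cderiv_at f z f' -> Cderiv_at g z g' ->
       0 < Re (Cdiv f' g')).

(* Write f(z) = z 3F2(a,b,c;d,e;z) = sum A_n z^(n+1), so that f'(z) = sum B_n z^n with
   B_n = (n+1) A_n and B_0 = 1.  The sign of B_n - B_(n+1) is that of a cubic in n whose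
   coefficients are nonnegative exactly by the hypotheses on d and e, so (B_n) decreases, and
   summation by parts gives Re((1 - z) f'(z)) >= 1 - |z| > 0, i.e. Re(f'/g') > 0 since
   g'(z) = 1/(1 - z).

   Univalence is a Noshiro-Warschawski argument in the coordinate p = Log(1 - z).  The image of
   the disk, {p : |Im p| < pi/2, exp(Re p) < 2 cos(Im p)}, is convex because ln cos is concave.
   Along the segment from p1 to p2, s |-> Re(f(1 - exp p(s)) * conj(p1 - p2)) has derivative
   |p2 - p1|^2 Re((1 - z) f'(z)) > 0, so f differs at the two endpoints. *)

From Stdlib Require Import Reals Factorial Lra Psatz.
From Coquelicot Require Import Coquelicot.
Open Scope R_scope.

(** * Complex series *)

Lemma Im_le_Cmod (z : C) : Rabs (Im z) <= Cmod z.
Proof.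
  pose proof (Rmax_Cmod z); pose proof (Rmax_r (Rabs (Re z)) (Rabs (Im z))).
  unfold Re, Im in *; lra.
Qed.

Lemma Re_le_Cmod (z : C) : Re z <= Cmod z.
Proof. pose proof (re_le_Cmod z); pose proof (Rle_abs (Re z)); lra. Qed.

Lemma Cmod_le_Rabs_Re_Im (z : C) : Cmod z <= Rabs (Re z) + Rabs (Im z).
Proof.
  pose proof (Cmod2_alt z) as E; rewrite <- (pow2_abs (Re z)), <- (pow2_abs (Im z)) in E.
  pose proof (Cmod_ge_0 z); pose proof (Rabs_pos (Re z)); pose proof (Rabs_pos (Im z)).
  nra.
Qed.

Lemma ex_series_R_lincomb (x y : R) (u v w : nat -> R) :
  (forall n, w n = x * u n + y * v n) -> ex_series u -> ex_series v -> ex_series w.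
Proof.
  intros Hw Hu Hv; apply (ex_series_ext (fun n => x * u n + y * v n)); [easy |].
  exact (ex_series_plus _ _ (ex_series_scal_l x u Hu) (ex_series_scal_l y v Hv)).
Qed.

Lemma Series_R_lincomb (x y : R) (u v w : nat -> R) :
  (forall n, w n = x * u n + y * v n) -> ex_series u -> ex_series v ->
  Series w = x * Series u + y * Series v.
Proof.
  intros Hw Hu Hv; rewrite (Series_ext _ _ Hw), Series_plus
    by (apply (ex_series_scal_l x u Hu) || apply (ex_series_scal_l y v Hv)).
  now rewrite !Series_scal_l.
Qed.

Definition ex_CSeries (u : nat -> C) : Prop :=
  ex_series (fun n => Re (u n)) /\ ex_series (fun n => Im (u n)).

Lemma ex_CSeries_le (u : nat -> C) (b : nat -> R) :
  (forall n, Cmod (u n) <= b n) -> ex_series b -> ex_CSeries u.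
Proof.
  intros Hb Hs; split;
    apply (@ex_series_le R_AbsRing R_CompleteNormedModule _ b); [| exact Hs | | exact Hs];
    intros n; eapply Rle_trans; [| apply Hb | | apply Hb].
  - apply re_le_Cmod.
  - apply Im_le_Cmod.
Qed.

Lemma Cmod_CSeries_le (u : nat -> C) (b : nat -> R) :
  (forall n, Cmod (u n) <= b n) -> ex_series b -> Cmod (CSeries u) <= 2 * Series b.
Proof.
  intros Hb Hs.
  assert (Hcomp : forall p : C -> R, (forall z, Rabs (p z) <= Cmod z) ->
            Rabs (Series (fun n => p (u n))) <= Series b).
  { intros p Hp.
    assert (Habs : ex_series (fun n => Rabs (p (u n)))).
    { apply (@ex_series_le R_AbsRing R_CompleteNormedModule _ b); [intros n | exact Hs].
      change (Rabs (Rabs (p (u n))) <= b n); rewrite Rabs_Rabsolu.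
      eapply Rle_trans; [apply Hp | apply Hb]. }
    eapply Rle_trans; [apply Series_Rabs, Habs |].
    apply Series_le; auto; intros n; split; [apply Rabs_pos |].
    eapply Rle_trans; [apply Hp | apply Hb]. }
  eapply Rle_trans; [apply Cmod_le_Rabs_Re_Im |].
  pose proof (Hcomp Re re_le_Cmod); pose proof (Hcomp Im Im_le_Cmod).
  unfold CSeries, Re at 1, Im at 1; simpl; lra.
Qed.

Lemma ex_CSeries_minus (u v : nat -> C) :
  ex_CSeries u -> ex_CSeries v -> ex_CSeries (fun n => (u n - v n)%C).
Proof.
  intros [Hu1 Hu2] [Hv1 Hv2]; split.
  - apply (ex_series_R_lincomb 1 (-1) (fun n => Re (u n)) (fun n => Re (v n))); auto.
    intros n; unfold Cminus; rewrite re_plus, re_opp; ring.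
  - apply (ex_series_R_lincomb 1 (-1) (fun n => Im (u n)) (fun n => Im (v n))); auto.
    intros n; unfold Cminus; rewrite im_plus, im_opp; ring.
Qed.

Lemma ex_CSeries_scal (k : C) (u : nat -> C) :
  ex_CSeries u -> ex_CSeries (fun n => (k * u n)%C).
Proof.
  intros [H1 H2]; split.
  - apply (ex_series_R_lincomb (Re k) (- Im k) (fun n => Re (u n)) (fun n => Im (u n))); auto.
    intros n; rewrite re_mult; ring.
  - apply (ex_series_R_lincomb (Im k) (Re k) (fun n => Re (u n)) (fun n => Im (u n))); auto.
    intros n; rewrite im_mult; ring.
Qed.

Lemma ex_CSeries_incr_1 (u : nat -> C) :
  ex_CSeries u -> ex_CSeries (fun n => u (S n)).
Proof.
  intros [H1 H2]; split;
    apply (@ex_series_incr_1 R_AbsRing R_NormedModule (fun n => _ (u n))); assumption.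
Qed.

Lemma CSeries_ext (u v : nat -> C) : (forall n, u n = v n) -> CSeries u = CSeries v.
Proof.
  intros H; unfold CSeries; f_equal; apply Series_ext; intros n; now rewrite H.
Qed.

Lemma CSeries_plus (u v : nat -> C) : ex_CSeries u -> ex_CSeries v ->
  CSeries (fun n => (u n + v n)%C) = (CSeries u + CSeries v)%C.
Proof.
  intros [Hu1 Hu2] [Hv1 Hv2]; unfold CSeries; apply injective_projections; simpl;
    [rewrite <- Series_plus by assumption | rewrite <- Series_plus by assumption];
    apply Series_ext; intros n; now rewrite ?re_plus, ?im_plus.
Qed.

Lemma CSeries_scal (k : C) (u : nat -> C) : ex_CSeries u ->
  CSeries (fun n => (k * u n)%C) = (k * CSeries u)%C.
Proof.
  intros [H1 H2]; unfold CSeries; apply injective_projections.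
  - rewrite (Series_R_lincomb (Re k) (- Im k) (fun n => Re (u n)) (fun n => Im (u n))
      (fun n => Re (k * u n))); auto.
    + unfold Re, Im; simpl; ring.
    + intros n; rewrite re_mult; ring.
  - rewrite (Series_R_lincomb (Im k) (Re k) (fun n => Re (u n)) (fun n => Im (u n))
      (fun n => Im (k * u n))); auto.
    + unfold Re, Im; simpl; ring.
    + intros n; rewrite im_mult; ring.
Qed.

Lemma CSeries_minus (u v : nat -> C) : ex_CSeries u -> ex_CSeries v ->
  CSeries (fun n => (u n - v n)%C) = (CSeries u - CSeries v)%C.
Proof.
  intros Hu Hv.
  transitivity (CSeries (fun n => (u n + (-1) * v n)%C)).
  { apply CSeries_ext; intros n; ring. }
  rewrite CSeries_plus, CSeries_scal by auto using ex_CSeries_scal; ring.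
Qed.

Lemma CSeries_incr_1 (u : nat -> C) : ex_CSeries u ->
  CSeries u = (u 0%nat + CSeries (fun n => u (S n)))%C.
Proof.
  intros [H1 H2]; unfold CSeries.
  rewrite (Series_incr_1 _ H1), (Series_incr_1 _ H2); destruct (u 0%nat); reflexivity.
Qed.

Lemma Re_sum_n (v : nat -> C) (N : nat) :
  Re (sum_n v N) = sum_n (fun k => Re (v k)) N.
Proof.
  induction N as [| N IH]; [now rewrite !sum_O |].
  rewrite !sum_Sn, <- IH; apply re_plus.
Qed.

Lemma Series_ge_of_partial_sums (a : nat -> R) (L : R) :
  ex_series a -> (forall N, L <= sum_n a N) -> L <= Series a.
Proof.
  intros Hex HN.
  apply (is_lim_seq_le (fun _ => L) (sum_n a) L (Series a) HN (is_lim_seq_const L)).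
  exact (Series_correct a Hex).
Qed.

(** * Complex derivatives *)

Lemma Cderiv_at_iff (F : C -> C) (z l : C) :
  Cderiv_at F z l <->
  forall eps, 0 < eps -> exists delta, 0 < delta /\ forall w, Cmod (w - z) < delta ->
    Cmod (F w - F z - (w - z) * l) <= eps * Cmod (w - z).
Proof.
  split.
  - intros [_ Hd] eps Heps.
    destruct (Hd z (fun P H => H) (mkposreal eps Heps)) as [delta Hdelta].
    exists delta; split; [apply cond_pos |].
    intros w Hw; apply (Hdelta w), Hw.
  - intros H; split; [apply is_linear_scal_l |].
    intros x Hx.
    pose proof (@is_filter_lim_locally_unique C_AbsRing (AbsRing_NormedModule C_AbsRing) z x Hx)
      as Hzx; subst x.
    intros eps; apply (@locally_le_locally_norm C_AbsRing (AbsRing_NormedModule C_AbsRing)).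
    destruct (H eps (cond_pos eps)) as [delta [Hdelta Hw]].
    exists (mkposreal delta Hdelta); intros w Hb; apply Hw, Hb.
Qed.

Lemma Cderiv_at_of_quadratic_remainder (F : C -> C) (z l : C) (K delta : R) :
  0 < delta ->
  (forall w, Cmod (w - z) < delta -> Cmod (F w - F z - (w - z) * l) <= K * Cmod (w - z) ^ 2) ->
  Cderiv_at F z l.
Proof.
  intros Hdelta Hrem; apply Cderiv_at_iff; intros eps Heps.
  set (K' := Rabs K + 1).
  assert (HK : K <= K' /\ 0 < K')
    by (pose proof (Rle_abs K); pose proof (Rabs_pos K); unfold K'; lra).
  exists (Rmin delta (eps / K')); split; [apply Rmin_pos; [lra | apply Rdiv_lt_0_compat; lra] |].
  intros w Hw.
  pose proof (Rmin_l delta (eps / K')); pose proof (Rmin_r delta (eps / K')).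
  pose proof (Cmod_ge_0 (w - z)).
  assert (K' * Cmod (w - z) <= eps).
  { apply Rlt_le; replace eps with (K' * (eps / K')) by (field; lra).
    apply Rmult_lt_compat_l; lra. }
  eapply Rle_trans; [apply Hrem; lra |]; nra.
Qed.

Lemma Cderiv_at_of_Cauchy_Riemann (F : C -> C) (x y p q : R) :
  differentiable_pt_lim (fun u v => Re (F (u, v))) x y p (- q) ->
  differentiable_pt_lim (fun u v => Im (F (u, v))) x y q p ->
  Cderiv_at F (x, y) (p, q).
Proof.
  intros Hu Hv; apply Cderiv_at_iff; intros eps Heps.
  destruct (Hu (mkposreal (eps / 2) ltac:(lra))) as [d1 Hd1].
  destruct (Hv (mkposreal (eps / 2) ltac:(lra))) as [d2 Hd2].
  exists (Rmin d1 d2); split; [apply Rmin_pos; apply cond_pos |].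
  intros [u v] Hw.
  pose proof (Rmin_l d1 d2); pose proof (Rmin_r d1 d2).
  pose proof (re_le_Cmod ((u, v) - (x, y))%C) as Hre.
  pose proof (Im_le_Cmod ((u, v) - (x, y))%C) as Him.
  simpl in Hre, Him; unfold Rminus in Hd1, Hd2.
  assert (Hmax : Rmax (Rabs (u + - x)) (Rabs (v + - y)) <= Cmod ((u, v) - (x, y))%C)
    by (apply Rmax_lub; assumption).
  specialize (Hd1 u v ltac:(lra) ltac:(lra)); specialize (Hd2 u v ltac:(lra) ltac:(lra)).
  simpl in Hd1, Hd2.
  eapply Rle_trans; [apply Cmod_le_Rabs_Re_Im |].
  destruct (F (u, v)) as [a1 b1]; destruct (F (x, y)) as [a2 b2]; simpl in Hd1, Hd2 |- *.
  replace (a1 + - a2 + - ((u + - x) * p - (v + - y) * q))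
    with (a1 + - a2 + - (p * (u + - x) + - q * (v + - y))) by ring.
  replace (b1 + - b2 + - ((u + - x) * q + (v + - y) * p))
    with (b1 + - b2 + - (q * (u + - x) + p * (v + - y))) by ring.
  assert (eps / 2 * Rmax (Rabs (u + - x)) (Rabs (v + - y)) <= eps / 2 * Cmod ((u, v) - (x, y))%C)
    by (apply Rmult_le_compat_l; lra).
  lra.
Qed.

Lemma Cderiv_at_reflect (F : C -> C) (z l : C) :
  Cderiv_at F (1 - z) l -> Cderiv_at (fun w => - F (1 - w))%C z l.
Proof.
  intros HF; apply Cderiv_at_iff; intros eps Heps.
  destruct (proj1 (Cderiv_at_iff F (1 - z) l) HF eps Heps) as [delta [Hdelta Hw]].
  exists delta; split; [exact Hdelta |]; intros w Hwz.
  replace (w - z)%C with (- ((1 - w) - (1 - z)))%C in * by ring.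
  rewrite Cmod_opp in *.
  replace (- F (1 - w) - - F (1 - z) - - (1 - w - (1 - z)) * l)%C
    with (- (F (1 - w) - F (1 - z) - (1 - w - (1 - z)) * l))%C by ring.
  rewrite Cmod_opp; apply Hw, Hwz.
Qed.

Lemma locally_disk (z : C) : inD z -> @locally (AbsRing_UniformSpace C_AbsRing) z inD.
Proof.
  intros Hz; apply (@locally_le_locally_norm C_AbsRing (AbsRing_NormedModule C_AbsRing)).
  exists (mkposreal (1 - Cmod z) ltac:(unfold inD in Hz; lra)); intros w Hw.
  unfold ball_norm in Hw; simpl in Hw; change (Cmod (w - z) < 1 - Cmod z) in Hw.
  unfold inD; replace w with (z + (w - z))%C by ring.
  pose proof (Cmod_triangle z (w - z)); lra.
Qed.

Lemma norm_C_R (h : C) : @norm R_AbsRing C_R_NormedModule h = Cmod h.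
Proof.
  destruct h as [x y].
  change (sqrt (Rabs x ^ 2 + Rabs y ^ 2) = Cmod (x, y)).
  rewrite !pow2_abs; reflexivity.
Qed.

Lemma Cderiv_at_filterdiff_R (F : C -> C) (z l : C) : Cderiv_at F z l ->
  @filterdiff R_AbsRing C_R_NormedModule C_R_NormedModule F (locally z) (fun h => (h * l)%C).
Proof.
  intros HF; split.
  - split.
    + intros [x1 x2] [y1 y2]; unfold Cmult; simpl.
      unfold plus; simpl; unfold prod_plus; simpl; unfold plus; simpl; f_equal; ring.
    + intros k [x1 x2]; unfold Cmult; simpl.
      unfold scal; simpl; unfold prod_scal; simpl; unfold scal; simpl; unfold mult; simpl.
      f_equal; ring.
    + exists (Cmod l + 1); split; [pose proof (Cmod_ge_0 l); lra |].
      intros x; rewrite !norm_C_R, Cmod_mult.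
      pose proof (Cmod_ge_0 x); pose proof (Cmod_ge_0 l); nra.
  - intros x Hx.
    pose proof (@is_filter_lim_locally_unique R_AbsRing C_R_NormedModule z x Hx) as E; subst x.
    intros eps; apply (@locally_le_locally_norm R_AbsRing C_R_NormedModule).
    destruct (proj1 (Cderiv_at_iff F z l) HF eps (cond_pos eps)) as [delta [Hdelta Hw]].
    exists (mkposreal delta Hdelta); intros w Hb; unfold ball_norm in Hb; simpl in Hb.
    rewrite norm_C_R in Hb; rewrite !norm_C_R; apply Hw, Hb.
Qed.

Lemma is_derive_pair (u v : R -> R) (t du dv : R) :
  is_derive u t du -> is_derive v t dv ->
  @is_derive R_AbsRing C_R_NormedModule (fun s => (u s, v s) : C) t ((du, dv) : C).
Proof.
  intros Hu Hv.
  pose proof (@filterdiff_plus_fct R_AbsRing R_NormedModule C_R_NormedModule (locally t) _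
     (fun s => @scal R_AbsRing C_R_NormedModule (u s) ((1, 0) : C))
     (fun s => @scal R_AbsRing C_R_NormedModule (v s) ((0, 1) : C)) _ _
     (@filterdiff_scal_l_fct R_AbsRing R_NormedModule C_R_NormedModule (locally t) _
        ((1, 0) : C) u _ Hu)
     (@filterdiff_scal_l_fct R_AbsRing R_NormedModule C_R_NormedModule (locally t) _
        ((0, 1) : C) v _ Hv)) as H.
  eapply filterdiff_ext_lin; [eapply filterdiff_ext; [| exact H] |].
  - intros s; cbn.
    change (((u s * 1 + v s * 0, u s * 0 + v s * 1) : C) = (u s, v s)).
    apply injective_projections; simpl; ring.
  - intros h; cbn.
    change (((h * du * 1 + h * dv * 0, h * du * 0 + h * dv * 1) : C) = (h * du, h * dv)).
    apply injective_projections; simpl; ring.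
Qed.

Lemma derivable_pt_lim_Re_comp (F : C -> C) (dF : C) (g : R -> C) (dg : C) (t : R) (k : C) :
  Cderiv_at F (g t) dF -> @is_derive R_AbsRing C_R_NormedModule g t dg ->
  derivable_pt_lim (fun s => Re (F (g s) * k)) t (Re (dF * dg * k)).
Proof.
  intros HF Hg; apply is_derive_Reals.
  pose proof (@filterdiff_comp' R_AbsRing R_NormedModule C_R_NormedModule C_R_NormedModule
    g F t _ _ Hg (Cderiv_at_filterdiff_R F (g t) dF HF)) as HFg.
  assert (Hlin : @is_linear R_AbsRing C_R_NormedModule R_NormedModule (fun x : C => Re (x * k))).
  { split.
    - intros [x1 x2] [y1 y2]; unfold Cmult, Re; simpl.
      unfold plus; simpl; unfold prod_plus; simpl; unfold plus; simpl; ring.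
    - intros r [x1 x2]; unfold Cmult, Re; simpl.
      unfold scal; simpl; unfold prod_scal; simpl; unfold scal, mult; simpl; ring.
    - exists (Cmod k + 1); split; [pose proof (Cmod_ge_0 k); lra |].
      intros x; rewrite norm_C_R; change (norm (Re (x * k))) with (Rabs (Re (x * k))).
      eapply Rle_trans; [apply re_le_Cmod |]; rewrite Cmod_mult.
      pose proof (Cmod_ge_0 x); pose proof (Cmod_ge_0 k); nra. }
  pose proof (@filterdiff_comp' R_AbsRing R_NormedModule C_R_NormedModule R_NormedModule
    _ _ t _ _ HFg (filterdiff_linear _ Hlin)) as H.
  unfold is_derive; eapply filterdiff_ext_lin; [exact H |].
  intros h; destruct dg as [g1 g2], dF as [f1 f2], k as [k1 k2]; unfold Cmult, Re; simpl.
  unfold scal; simpl; unfold prod_scal; simpl; unfold scal, mult; simpl; ring.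
Qed.

Lemma Re_mul_lt_of_deriv_pos (F F' : C -> C) (g g' : R -> C) (k : C) :
  (forall s, 0 <= s <= 1 -> Cderiv_at F (g s) (F' (g s))) ->
  (forall s, @is_derive R_AbsRing C_R_NormedModule g s (g' s)) ->
  (forall s, 0 <= s <= 1 -> 0 < Re (F' (g s) * g' s * k)) ->
  Re (F (g 0) * k) < Re (F (g 1) * k).
Proof.
  intros HF Hg Hpos.
  destruct (MVT_cor2 (fun s => Re (F (g s) * k)) (fun s => Re (F' (g s) * g' s * k)) 0 1 Rlt_0_1)
    as [t [Ht Ht01]].
  { intros s Hs; apply derivable_pt_lim_Re_comp; auto. }
  pose proof (Hpos t ltac:(lra)); lra.
Qed.

(** * Power series *)

Lemma ex_series_sq_geom (r : R) : 0 < r < 1 ->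
  ex_series (fun n => (INR n + 1) ^ 2 * r ^ n).
Proof.
  intros Hr.
  assert (Hpos : forall n, 0 < (INR n + 1) ^ 2 * r ^ n).
  { intros n; pose proof (pos_INR n); apply Rmult_lt_0_compat; [nra | apply pow_lt; lra]. }
  apply (ex_series_ext (fun n => Rabs ((INR n + 1) ^ 2 * r ^ n))).
  { intros n; apply Rabs_pos_eq, Rlt_le, Hpos. }
  apply (ex_series_DAlembert _ r); [lra | intros n; specialize (Hpos n); lra |].
  apply (is_lim_seq_ext (fun n => (1 + / (INR n + 1)) ^ 2 * r)).
  { intros n; rewrite Rabs_pos_eq by (apply Rlt_le, Rdiv_lt_0_compat; apply Hpos).
    rewrite S_INR; pose proof (pos_INR n); pose proof (pow_lt r n (proj1 Hr)).
    simpl; field; lra. }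
  assert (Hinv : is_lim_seq (fun n => / (INR n + 1)) 0).
  { apply (is_lim_seq_ext (fun n => / INR (S n))); [intros n; now rewrite S_INR |].
    apply (is_lim_seq_incr_1 (fun n => / INR n)).
    replace (Finite 0) with (Rbar_inv p_infty) by reflexivity.
    apply is_lim_seq_inv; [apply is_lim_seq_INR | discriminate]. }
  enough (Hlim : is_lim_seq (fun n => (1 + / (INR n + 1)) ^ 2 * r) ((1 + 0) ^ 2 * r))
    by (replace ((1 + 0) ^ 2 * r) with r in Hlim by ring; exact Hlim).
  apply is_lim_seq_mult'; [| apply is_lim_seq_const].
  apply (is_lim_seq_ext (fun n => (1 + / (INR n + 1)) * ((1 + / (INR n + 1)) * 1))).
  { intros n; reflexivity. }
  apply is_lim_seq_mult'; [| apply is_lim_seq_mult'; [| apply is_lim_seq_const]];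
    apply is_lim_seq_plus'; auto using is_lim_seq_const.
Qed.

Definition CPSeries (a : nat -> R) (z : C) : C := CSeries (fun n => (a n * z ^ n)%C).

Lemma ex_CPSeries (a : nat -> R) (M : R) (z : C) :
  (forall n, Rabs (a n) <= M * (INR n + 1) ^ 2) -> Cmod z < 1 ->
  ex_CSeries (fun n => (a n * z ^ n)%C).
Proof.
  intros Ha Hz; pose proof (Cmod_ge_0 z).
  set (r := (1 + Cmod z) / 2).
  assert (Hr : 0 < r < 1) by (unfold r; lra).
  assert (Hzr : Cmod z <= r) by (unfold r; lra).
  apply (ex_CSeries_le _ (fun n => M * ((INR n + 1) ^ 2 * r ^ n))).
  - intros n; rewrite Cmod_mult, Cmod_R, Cmod_pow.
    pose proof (Rabs_pos (a n)); pose proof (Ha n).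
    pose proof (pow_incr (Cmod z) r n (conj (Cmod_ge_0 z) Hzr)).
    pose proof (pow_le (Cmod z) n (Cmod_ge_0 z)).
    nra.
  - exact (ex_series_scal_l M _ (ex_series_sq_geom r Hr)).
Qed.

Lemma ex_CPSeries_bounded (a : nat -> R) (M : R) (z : C) :
  (forall n, Rabs (a n) <= M) -> Cmod z < 1 -> ex_CSeries (fun n => (a n * z ^ n)%C).
Proof.
  intros Ha; apply (ex_CPSeries _ M); intros n.
  pose proof (Ha n); pose proof (Ha 0%nat); pose proof (Rabs_pos (a 0%nat)); pose proof (pos_INR n).
  assert (1 <= (INR n + 1) ^ 2) by nra; nra.
Qed.

Lemma Cpow_S_remainder_le (w z : C) (r : R) (n : nat) : Cmod w <= r -> Cmod z <= r ->
  r * Cmod (w ^ S n - z ^ S n - (INR n + 1)%R * z ^ n * (w - z))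
    <= (INR n + 1) ^ 2 * r ^ n * Cmod (w - z) ^ 2.
Proof.
  intros Hw Hz; pose proof (Cmod_ge_0 w); pose proof (Cmod_ge_0 (w - z)).
  induction n as [| n IH].
  - replace (INR 0 + 1)%R with 1 by (simpl; ring).
    replace (w ^ 1 - z ^ 1 - 1 * z ^ 0 * (w - z))%C with (RtoC 0) by (simpl; ring).
    rewrite Cmod_0; simpl; nra.
  - set (E := (w ^ S n - z ^ S n - (INR n + 1)%R * z ^ n * (w - z))%C) in IH.
    replace (w ^ S (S n) - z ^ S (S n) - (INR (S n) + 1)%R * z ^ S n * (w - z))%C
      with (w * E + (INR n + 1)%R * z ^ n * ((w - z) * (w - z)))%C
      by (unfold E; rewrite S_INR, !RtoC_plus, !Cpow_S; ring).
    pose proof (Cmod_triangle (w * E) ((INR n + 1)%R * z ^ n * ((w - z) * (w - z)))) as Htri.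
    rewrite !Cmod_mult, Cmod_R, Cmod_pow, Rabs_pos_eq in Htri by (pose proof (pos_INR n); lra).
    pose proof (Cmod_ge_0 E); pose proof (pos_INR n).
    pose proof (pow_incr (Cmod z) r n (conj (Cmod_ge_0 z) Hz)).
    pose proof (pow_le r n (Rle_trans _ _ _ (Cmod_ge_0 z) Hz)).
    rewrite S_INR; simpl pow in *.
    set (h := Cmod (w - z)) in *; set (N := INR n) in *.
    assert (r * (Cmod w * Cmod E) <= r * ((N + 1) * ((N + 1) * 1) * r ^ n * (h * (h * 1))))
      by (replace (r * (Cmod w * Cmod E)) with (Cmod w * (r * Cmod E)) by ring;
          apply Rmult_le_compat; nra).
    assert (r * ((N + 1) * Cmod z ^ n * (h * h)) <= r * ((N + 1) * r ^ n * (h * h)))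
      by (apply Rmult_le_compat_l;
          [lra | apply Rmult_le_compat_r; [nra | apply Rmult_le_compat_l; lra]]).
    assert (0 <= r * r ^ n * (h * h)) by (apply Rmult_le_pos; nra).
    nra.
Qed.

Definition coef_deriv (a : nat -> R) (n : nat) : R := (INR n + 1) * a (S n).

Lemma CPSeries_sub_linear (a : nat -> R) (w z : C) :
  ex_CSeries (fun n => (a n * w ^ n)%C) -> ex_CSeries (fun n => (a n * z ^ n)%C) ->
  ex_CSeries (fun n => (coef_deriv a n * z ^ n)%C) ->
  (CPSeries a w - CPSeries a z - (w - z) * CPSeries (coef_deriv a) z)%C
  = CSeries (fun n => a (S n) * (w ^ S n - z ^ S n - (INR n + 1)%R * z ^ n * (w - z)))%C.
Proof.
  intros Cw Cz Cz'; unfold CPSeries.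
  pose proof (ex_CSeries_minus _ _ Cw Cz) as Cdiff.
  rewrite <- CSeries_scal, <- (CSeries_minus _ _ Cw Cz), (CSeries_incr_1 _ Cdiff) by assumption.
  replace (a 0%nat * w ^ 0 - a 0%nat * z ^ 0)%C with (RtoC 0) by (simpl; ring).
  rewrite Cplus_0_l,
    <- (CSeries_minus _ _ (ex_CSeries_incr_1 _ Cdiff) (ex_CSeries_scal (w - z) _ Cz')).
  apply CSeries_ext; intros n; unfold coef_deriv; rewrite RtoC_mult; ring.
Qed.

Lemma Cmod_CPSeries_remainder_le (a : nat -> R) (M r : R) (w z : C) :
  (forall n, Rabs (a n) <= M) -> 0 < r < 1 -> Cmod w <= r -> Cmod z <= r ->
  Cmod (CPSeries a w - CPSeries a z - (w - z) * CPSeries (coef_deriv a) z)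
    <= 2 * (M / r * Series (fun n => (INR n + 1) ^ 2 * r ^ n)) * Cmod (w - z) ^ 2.
Proof.
  intros Ha Hr Hw Hz.
  assert (HM : 0 <= M) by (pose proof (Ha 0%nat); pose proof (Rabs_pos (a 0%nat)); lra).
  assert (Hderiv : forall n, Rabs (coef_deriv a n) <= M * (INR n + 1) ^ 2).
  { intros n; unfold coef_deriv; pose proof (pos_INR n); pose proof (Ha (S n)).
    pose proof (Rabs_pos (a (S n))).
    rewrite Rabs_mult, (Rabs_pos_eq (INR n + 1)) by lra; nra. }
  rewrite CPSeries_sub_linear;
    [| apply (ex_CPSeries_bounded _ M); auto; lra .. | apply (ex_CPSeries _ M); auto; lra].
  eapply Rle_trans.
  - apply (Cmod_CSeries_le _ (fun n => M / r * ((INR n + 1) ^ 2 * r ^ n) * Cmod (w - z) ^ 2)).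
    + intros n; rewrite Cmod_mult, Cmod_R.
      set (E := (w ^ S n - z ^ S n - (INR n + 1)%R * z ^ n * (w - z))%C).
      pose proof (Cpow_S_remainder_le w z r n Hw Hz); pose proof (Cmod_ge_0 E).
      apply Rle_trans with (M * Cmod E); [apply Rmult_le_compat_r; auto |].
      apply Rle_trans with (M * ((INR n + 1) ^ 2 * r ^ n * Cmod (w - z) ^ 2 / r)).
      * apply Rmult_le_compat_l; [lra |].
        apply Rle_div_r; [lra | rewrite Rmult_comm; assumption].
      * right; field; lra.
    + apply (ex_series_scal_r (Cmod (w - z) ^ 2)).
      exact (ex_series_scal_l _ _ (ex_series_sq_geom r Hr)).
  - rewrite Series_scal_r, Series_scal_l; right; ring.
Qed.

Lemma CPSeries_deriv (a : nat -> R) (M : R) (z : C) :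
  (forall n, Rabs (a n) <= M) -> Cmod z < 1 ->
  Cderiv_at (CPSeries a) z (CPSeries (coef_deriv a) z).
Proof.
  intros Ha Hz; pose proof (Cmod_ge_0 z).
  set (r := (1 + Cmod z) / 2).
  apply (Cderiv_at_of_quadratic_remainder _ _ _
    (2 * (M / r * Series (fun n => (INR n + 1) ^ 2 * r ^ n))) ((1 - Cmod z) / 2)); [lra |].
  intros w Hw; apply (Cmod_CPSeries_remainder_le _ M); [exact Ha | unfold r; lra | | unfold r; lra].
  replace w with (z + (w - z))%C by ring.
  pose proof (Cmod_triangle z (w - z)); unfold r; lra.
Qed.

Definition coef_shift (a : nat -> R) (n : nat) : R :=
  match n with O => 0 | S m => a m end.

Lemma Cmult_CPSeries (a : nat -> R) (M : R) (z : C) :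
  (forall n, Rabs (a n) <= M) -> Cmod z < 1 ->
  (z * CPSeries a z)%C = CPSeries (coef_shift a) z.
Proof.
  intros Ha Hz.
  assert (Hshift : forall n, Rabs (coef_shift a n) <= M).
  { intros [| n]; simpl; [| apply Ha].
    rewrite Rabs_R0; pose proof (Ha 0%nat); pose proof (Rabs_pos (a 0%nat)); lra. }
  pose proof (ex_CPSeries_bounded _ _ _ Ha Hz) as Conv.
  pose proof (ex_CPSeries_bounded _ _ _ Hshift Hz) as Conv_shift.
  unfold CPSeries; rewrite (CSeries_incr_1 _ Conv_shift), <- (CSeries_scal _ _ Conv).
  simpl coef_shift; rewrite Cmult_0_l, Cplus_0_l.
  apply CSeries_ext; intros n; rewrite Cpow_S; ring.
Qed.

Lemma CPSeries_at_0 (a : nat -> R) (M : R) :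
  (forall n, Rabs (a n) <= M) -> CPSeries a 0 = a 0%nat.
Proof.
  intros Ha; unfold CPSeries.
  assert (Hconv : ex_CSeries (fun n => (a n * 0 ^ n)%C))
    by (apply (ex_CPSeries_bounded _ M); [exact Ha | rewrite Cmod_0; lra]).
  rewrite (CSeries_incr_1 _ Hconv).
  rewrite (CSeries_ext _ (fun n => 0 * (a (S n) * 0 ^ S n))%C) by (intros n; simpl; ring).
  rewrite (CSeries_scal _ _ (ex_CSeries_incr_1 _ Hconv)); simpl; ring.
Qed.

Lemma Cmod_pow_S_le (z : C) (n : nat) : Cmod z <= 1 -> Cmod (z ^ S n) <= Cmod z.
Proof.
  intros Hz; rewrite Cmod_pow; simpl; pose proof (Cmod_ge_0 z).
  pose proof (pow_incr (Cmod z) 1 n (conj (Cmod_ge_0 z) Hz)); rewrite pow1 in *.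
  pose proof (pow_le (Cmod z) n (Cmod_ge_0 z)); nra.
Qed.

Lemma nonincreasing_coef_bounds (B : nat -> R) :
  B 0%nat = 1 -> (forall n, 0 <= B (S n) <= B n) -> forall n, 0 <= B n <= 1.
Proof. intros HB0 HBdec n; induction n as [| n IH]; [lra |]; pose proof (HBdec n); lra. Qed.

Lemma Re_one_sub_mul_partial_sum_ge (B : nat -> R) (z : C) (N : nat) :
  B 0%nat = 1 -> (forall n, 0 <= B (S n) <= B n) -> Cmod z <= 1 ->
  1 - Cmod z <= Re (sum_n (fun n => (1 - z) * (B n * z ^ n))%C N).
Proof.
  intros HB0 HBdec Hz.
  set (v := fun n => ((1 - z) * (B n * z ^ n))%C).
  assert (Hpow : forall n, Cmod (z ^ S n) <= Cmod z) by (intros n; apply Cmod_pow_S_le, Hz).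
  assert (Hterm : forall x n, 0 <= x -> Re (x * z ^ S n)%C <= x * Cmod z).
  { intros x n Hx; eapply Rle_trans; [apply Re_le_Cmod |].
    rewrite Cmod_mult, Cmod_R, Rabs_pos_eq by exact Hx.
    apply Rmult_le_compat_l; [exact Hx | apply Hpow]. }
  (* Summation by parts, keeping the boundary term B_N z^(N+1). *)
  assert (Hinv : forall K, 1 - Cmod z * (1 - B K) <= Re (sum_n v K + B K * z ^ S K)%C).
  { induction K as [| K IH].
    - rewrite sum_O; unfold v; rewrite HB0; simpl; lra.
    - replace (sum_n v (S K) + B (S K) * z ^ S (S K))%C
        with (sum_n v K + B K * z ^ S K - (B K - B (S K))%R * z ^ S K)%C
        by (rewrite sum_Sn; unfold v; rewrite RtoC_minus, !Cpow_S; change plus with Cplus; ring).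
      unfold Cminus at 1; rewrite re_plus, re_opp.
      pose proof (HBdec K); pose proof (Hterm (B K - B (S K)) K ltac:(lra)); lra. }
  replace (sum_n v N) with (sum_n v N + B N * z ^ S N - B N * z ^ S N)%C by ring.
  unfold Cminus at 1; rewrite re_plus, re_opp.
  pose proof (nonincreasing_coef_bounds B HB0 HBdec N).
  pose proof (Hinv N); pose proof (Hterm (B N) N ltac:(lra)); lra.
Qed.

Lemma Re_one_sub_mul_CPSeries_ge (B : nat -> R) (z : C) :
  B 0%nat = 1 -> (forall n, 0 <= B (S n) <= B n) -> Cmod z < 1 ->
  1 - Cmod z <= Re ((1 - z) * CPSeries B z).
Proof.
  intros HB0 HBdec Hz.
  assert (Hconv : ex_CSeries (fun n => (B n * z ^ n)%C)).
  { apply (ex_CPSeries_bounded _ 1); [intros n | exact Hz].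
    pose proof (nonincreasing_coef_bounds B HB0 HBdec n); rewrite Rabs_pos_eq; lra. }
  unfold CPSeries; rewrite <- CSeries_scal by exact Hconv.
  apply Series_ge_of_partial_sums; [apply (ex_CSeries_scal _ _ Hconv) |].
  intros N; rewrite <- Re_sum_n; apply Re_one_sub_mul_partial_sum_ge; auto; lra.
Qed.

(** * The logarithm *)

(* Principal logarithm, valid on the right half-plane. *)
Definition Clog_rhp (w : C) : C := (ln (Cmod w), atan (Im w / Re w)).

(* Also true at [x = 0], where both sides are the junk value [ln 0 = 0]. *)
Lemma ln_sqrt_half (x : R) : 0 <= x -> ln (sqrt x) = ln x / 2.
Proof.
  intros Hx; destruct (Req_dec x 0) as [-> | Hx0].
  - rewrite sqrt_0; unfold ln.
    destruct (Rlt_dec 0 0) as [H0 | _]; [destruct (Rlt_irrefl 0 H0) | field].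
  - rewrite <- (sqrt_sqrt x) at 2 by lra.
    pose proof (sqrt_lt_R0 x ltac:(lra)); rewrite ln_mult by lra; field.
Qed.

Lemma Re_Clog_rhp (u v : R) : Re (Clog_rhp (u, v)) = ln (u ^ 2 + v ^ 2) / 2.
Proof.
  unfold Clog_rhp, Cmod, Re; cbn [fst snd].
  apply ln_sqrt_half; nra.
Qed.

Lemma locally_right_half_plane (x y : R) (P : R -> R -> Prop) : 0 < x ->
  (forall u v, 0 < u -> P u v) -> locally (x, y) (fun w : R * R => P (fst w) (snd w)).
Proof.
  intros Hx HP; exists (mkposreal (x / 2) ltac:(lra)); intros [u v] [Hu _].
  change (Rabs (u - x) < x / 2) in Hu; apply HP; apply Rabs_def2 in Hu; simpl; lra.
Qed.

Lemma continuous_div_sq_norm (N : R -> R -> R) (x y : R) :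
  continuity_2d_pt N x y -> x ^ 2 + y ^ 2 <> 0 ->
  continuous (fun w : R * R => N (fst w) (snd w) / (fst w ^ 2 + snd w ^ 2)) (x, y).
Proof.
  intros HN Hne.
  apply (continuity_2d_pt_filterlim (fun u v => N u v / (u ^ 2 + v ^ 2))).
  apply (continuity_2d_pt_ext (fun u v => N u v * / (u * u + v * v))).
  { intros u v; unfold Rdiv; simpl; do 3 f_equal; ring. }
  apply continuity_2d_pt_mult; [assumption |].
  apply continuity_2d_pt_inv;
    [| simpl; replace (x * x + y * y) with (x ^ 2 + y ^ 2) by ring; exact Hne].
  apply continuity_2d_pt_plus; apply continuity_2d_pt_mult;
    auto using continuity_2d_pt_id1, continuity_2d_pt_id2.
Qed.

Lemma differentiable_ln_sq_norm (x y : R) : 0 < x ->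
  differentiable_pt_lim (fun u v => ln (u ^ 2 + v ^ 2) / 2) x y
    (x / (x ^ 2 + y ^ 2)) (y / (x ^ 2 + y ^ 2)).
Proof.
  intros Hx; assert (HD : 0 < x ^ 2 + y ^ 2) by nra.
  apply filterdiff_differentiable_pt_lim.
  eapply filterdiff_ext_lin.
  - apply (is_derive_filterdiff (fun u v => ln (u ^ 2 + v ^ 2) / 2) x y
      (fun u v => u / (u ^ 2 + v ^ 2)) (y / (x ^ 2 + y ^ 2))).
    + apply (locally_right_half_plane x y
        (fun u v => is_derive (fun s => ln (s ^ 2 + v ^ 2) / 2) u (u / (u ^ 2 + v ^ 2)))); auto.
      intros u v Hu; assert (0 < u ^ 2 + v ^ 2) by nra.
      auto_derive; simpl in *; [lra | field; lra].
    + auto_derive; simpl in *; [lra | field; lra].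
    + apply (continuous_div_sq_norm (fun u v => u)); [apply continuity_2d_pt_id1 | lra].
  - intros [h k]; reflexivity.
Qed.

Lemma differentiable_atan_ratio (x y : R) : 0 < x ->
  differentiable_pt_lim (fun u v => atan (v / u)) x y
    (- y / (x ^ 2 + y ^ 2)) (x / (x ^ 2 + y ^ 2)).
Proof.
  intros Hx; assert (HD : 0 < x ^ 2 + y ^ 2) by nra.
  apply filterdiff_differentiable_pt_lim.
  eapply filterdiff_ext_lin.
  - apply (is_derive_filterdiff (fun u v => atan (v / u)) x y
      (fun u v => - v / (u ^ 2 + v ^ 2)) (x / (x ^ 2 + y ^ 2))).
    + apply (locally_right_half_plane x y
        (fun u v => is_derive (fun s => atan (v / s)) u (- v / (u ^ 2 + v ^ 2)))); auto.
      intros u v Hu; assert (0 < u ^ 2 + v ^ 2) by nra.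
      auto_derive; simpl in *; [lra | field; split; lra].
    + auto_derive; simpl in *; [lra | field; split; lra].
    + apply (continuous_div_sq_norm (fun u v => - v)); [| lra].
      apply continuity_2d_pt_opp, continuity_2d_pt_id2.
  - intros [h k]; reflexivity.
Qed.

Lemma Clog_rhp_deriv (w : C) : 0 < Re w -> Cderiv_at Clog_rhp w (/ w).
Proof.
  destruct w as [x y]; unfold Re; cbn [fst]; intros Hx.
  assert (HD : 0 < x ^ 2 + y ^ 2) by nra.
  replace (/ (x, y))%C with ((x / (x ^ 2 + y ^ 2), - y / (x ^ 2 + y ^ 2)) : C)
    by (unfold Cinv; simpl; f_equal; field; simpl in HD; lra).
  apply Cderiv_at_of_Cauchy_Riemann.
  - apply (differentiable_pt_lim_ext (fun u v => ln (u ^ 2 + v ^ 2) / 2)).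
    + exists (mkposreal 1 Rlt_0_1); intros u v _ _; symmetry; apply Re_Clog_rhp.
    + replace (- (- y / (x ^ 2 + y ^ 2))) with (y / (x ^ 2 + y ^ 2)) by (field; lra).
      apply differentiable_ln_sq_norm, Hx.
  - apply (differentiable_pt_lim_ext (fun u v => atan (v / u))).
    + exists (mkposreal 1 Rlt_0_1); intros u v _ _; reflexivity.
    + apply differentiable_atan_ratio, Hx.
Qed.

Lemma neglog1m_deriv (z : C) : 0 < Re (1 - z) -> Cderiv_at neglog1m z (/ (1 - z)).
Proof.
  intros Hz.
  apply (is_derive_ext (fun w => - Clog_rhp (1 - w))%C); [reflexivity |].
  apply Cderiv_at_reflect, Clog_rhp_deriv, Hz.
Qed.

(** * Univalence *)

Definition Cexp (p : C) : C := (exp (Re p) * cos (Im p), exp (Re p) * sin (Im p)).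

Lemma Cexp_Clog_rhp (w : C) : 0 < Re w -> Cexp (Clog_rhp w) = w.
Proof.
  destruct w as [x y]; unfold Cexp, Clog_rhp, Re, Im; cbn [fst snd]; intros Hx.
  assert (HC : 0 < Cmod (x, y)) by (apply Cmod_gt_0; intros E; injection E; lra).
  rewrite exp_ln, cos_atan, sin_atan by exact HC.
  assert (E : 1 + (y / x)² = (Cmod (x, y) / x)²).
  { pose proof (Cmod2_alt (x, y)) as Hm; unfold Re, Im in Hm; cbn [fst snd] in Hm.
    unfold Rsqr; field_simplify_eq; [nra | lra]. }
  rewrite E, sqrt_Rsqr by (apply Rlt_le, Rdiv_lt_0_compat; assumption).
  f_equal; field; lra.
Qed.

Lemma Cmod_one_sub_Cexp_lt_1 (p : C) :
  Cmod (1 - Cexp p) < 1 <-> exp (Re p) < 2 * cos (Im p).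
Proof.
  assert (E : Cmod (1 - Cexp p) ^ 2 = 1 + exp (Re p) * (exp (Re p) - 2 * cos (Im p))).
  { rewrite Cmod2_alt.
    replace (Re (1 - Cexp p)) with (1 - exp (Re p) * cos (Im p))
      by (unfold Cexp, Cminus, Cplus, Copp, Re, Im; simpl; ring).
    replace (Im (1 - Cexp p)) with (- (exp (Re p) * sin (Im p)))
      by (unfold Cexp, Cminus, Cplus, Copp, Re, Im; simpl; ring).
    pose proof (sin2_cos2 (Im p)) as Hsc; unfold Rsqr in Hsc.
    transitivity (1 - 2 * exp (Re p) * cos (Im p)
                  + exp (Re p) ^ 2 * (sin (Im p) * sin (Im p) + cos (Im p) * cos (Im p)));
      [ring | rewrite Hsc; ring]. }
  pose proof (exp_pos (Re p)); pose proof (Cmod_ge_0 (1 - Cexp p)).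
  split; intros Hlt.
  - assert (Cmod (1 - Cexp p) ^ 2 < 1) by nra; nra.
  - assert (Cmod (1 - Cexp p) ^ 2 < 1) by nra; nra.
Qed.

Lemma convex_comb_between (x y t : R) : 0 <= t <= 1 ->
  Rmin x y <= (1 - t) * x + t * y <= Rmax x y.
Proof.
  intros Ht; unfold Rmin, Rmax; destruct (Rle_dec x y); split; nra.
Qed.

Lemma concave_of_deriv_nonincreasing (f f' : R -> R) (lo hi : R) :
  (forall x, lo < x < hi -> is_derive f x (f' x)) ->
  (forall x y, lo < x -> x <= y -> y < hi -> f' y <= f' x) ->
  forall x y t, lo < x < hi -> lo < y < hi -> 0 <= t <= 1 ->
  (1 - t) * f x + t * f y <= f ((1 - t) * x + t * y).
Proof.
  intros Hf Hf' x y t Hx Hy Ht.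
  assert (Hmvt : forall a b, lo < a < hi -> lo < b < hi ->
            exists c, Rmin a b <= c <= Rmax a b /\ f b - f a = f' c * (b - a)).
  { intros a b Ha Hb.
    assert (Hin : forall s, Rmin a b <= s <= Rmax a b -> lo < s < hi)
      by (intros s Hs; unfold Rmin, Rmax in Hs; destruct (Rle_dec a b); lra).
    apply (MVT_gen f a b f').
    - intros s Hs; apply Hf, Hin; lra.
    - intros s Hs; apply continuity_pt_filterlim, (ex_derive_continuous f).
      exists (f' s); apply Hf, Hin, Hs. }
  set (m := (1 - t) * x + t * y).
  pose proof (convex_comb_between x y t Ht) as Hm; fold m in Hm.
  assert (Hmin : lo < m < hi)
    by (unfold Rmin, Rmax in Hm; destruct (Rle_dec x y); lra).
  destruct (Hmvt x m Hx Hmin) as [c1 [Hc1 E1]].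
  destruct (Hmvt m y Hmin Hy) as [c2 [Hc2 E2]].
  replace (m - x) with (t * (y - x)) in E1 by (unfold m; ring).
  replace (y - m) with ((1 - t) * (y - x)) in E2 by (unfold m; ring).
  assert (Hslope : (y - x) * (f' c2 - f' c1) <= 0).
  { destruct (Rle_dec x y) as [Hxy | Hxy].
    - rewrite Rmin_left, Rmax_right in Hm by lra.
      rewrite Rmin_left, Rmax_right in Hc1, Hc2 by lra.
      assert (f' c2 <= f' c1) by (apply Hf'; lra); nra.
    - rewrite Rmin_right, Rmax_left in Hm by lra.
      rewrite Rmin_right, Rmax_left in Hc1, Hc2 by lra.
      assert (f' c1 <= f' c2) by (apply Hf'; lra); nra. }
  assert (0 <= t * (1 - t)) by nra.
  assert (t * (1 - t) * ((y - x) * (f' c2 - f' c1)) <= 0)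
    by (rewrite <- (Rmult_0_r (t * (1 - t))); apply Rmult_le_compat_l; assumption).
  nra.
Qed.

Lemma ln_cos_concave (x y t : R) :
  - PI / 2 < x < PI / 2 -> - PI / 2 < y < PI / 2 -> 0 <= t <= 1 ->
  (1 - t) * ln (cos x) + t * ln (cos y) <= ln (cos ((1 - t) * x + t * y)).
Proof.
  apply (concave_of_deriv_nonincreasing (fun s => ln (cos s)) (fun s => - tan s)).
  - intros s Hs; assert (0 < cos s) by (apply cos_gt_0; lra).
    auto_derive; [lra | unfold tan; field; lra].
  - intros a b Ha Hab Hb; destruct (Req_dec a b) as [-> | Hne]; [lra |].
    pose proof (tan_increasing a b ltac:(lra) ltac:(lra) ltac:(lra)); lra.
Qed.

(* The image of the unit disk under [z |-> Log (1 - z)]. *)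
Definition log_disk (p : C) : Prop :=
  - PI / 2 < Im p < PI / 2 /\ exp (Re p) < 2 * cos (Im p).

Lemma log_disk_convex (p1 p2 : C) (s : R) :
  log_disk p1 -> log_disk p2 -> 0 <= s <= 1 -> log_disk (p1 + s * (p2 - p1))%C.
Proof.
  destruct p1 as [a1 b1], p2 as [a2 b2]; unfold log_disk, Re, Im; cbn [fst snd].
  intros [Hb1 He1] [Hb2 He2] Hs.
  replace (fst ((a1, b1) + s * ((a2, b2) - (a1, b1)))%C) with ((1 - s) * a1 + s * a2)
    by (simpl; ring).
  replace (snd ((a1, b1) + s * ((a2, b2) - (a1, b1)))%C) with ((1 - s) * b1 + s * b2)
    by (simpl; ring).
  pose proof (convex_comb_between b1 b2 s Hs) as Hb.
  assert (Hbs : - PI / 2 < (1 - s) * b1 + s * b2 < PI / 2)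
    by (unfold Rmin, Rmax in Hb; destruct (Rle_dec b1 b2); lra).
  split; [exact Hbs |].
  assert (Hlog : forall a b, - PI / 2 < b < PI / 2 -> exp a < 2 * cos b -> a < ln 2 + ln (cos b)).
  { intros a b Hb' Hab; assert (0 < cos b) by (apply cos_gt_0; lra).
    rewrite <- ln_mult, <- (ln_exp a) by lra; apply ln_increasing; [apply exp_pos | exact Hab]. }
  pose proof (Hlog a1 b1 Hb1 He1); pose proof (Hlog a2 b2 Hb2 He2).
  pose proof (ln_cos_concave b1 b2 s Hb1 Hb2 Hs).
  assert (0 < cos ((1 - s) * b1 + s * b2)) by (apply cos_gt_0; lra).
  replace (2 * cos ((1 - s) * b1 + s * b2))
    with (exp (ln 2 + ln (cos ((1 - s) * b1 + s * b2)))) by (rewrite exp_plus, !exp_ln; lra).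
  apply exp_increasing.
  destruct (Rle_lt_or_eq_dec 0 s (proj1 Hs)); nra.
Qed.

Lemma is_derive_one_sub_Cexp_segment (p d : C) (s : R) :
  @is_derive R_AbsRing C_R_NormedModule (fun s : R => 1 - Cexp (p + s * d))%C s
    (- (Cexp (p + s * d) * d))%C.
Proof.
  destruct p as [a b], d as [da db].
  assert (Hseg : forall t : R, ((a, b) + t * (da, db))%C = (a + t * da, b + t * db))
    by (intros t; apply injective_projections; simpl; ring).
  rewrite Hseg; unfold Cexp, Re, Im; cbn [fst snd].
  apply (is_derive_ext (fun t => (1 - exp (a + t * da) * cos (b + t * db),
                                 - (exp (a + t * da) * sin (b + t * db))) : C)).
  { intros t; rewrite Hseg; unfold Cexp, Re, Im; apply injective_projections; simpl; ring. }
  match goal with |- is_derive _ _ ?D =>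
    replace D with ((- (exp (a + s * da) * (cos (b + s * db) * da - sin (b + s * db) * db)),
                     - (exp (a + s * da) * (cos (b + s * db) * db + sin (b + s * db) * da))) : C)
      by (apply injective_projections; simpl; ring) end.
  apply is_derive_pair; auto_derive; auto; ring.
Qed.

Lemma Re_one_sub_pos (z : C) : inD z -> 0 < Re (1 - z).
Proof.
  intros Hz; pose proof (Re_le_Cmod z); unfold inD in Hz.
  unfold Cminus; rewrite re_plus, re_opp, re_RtoC; lra.
Qed.

Lemma one_sub_Cexp_Clog_rhp (z : C) : inD z -> (1 - Cexp (Clog_rhp (1 - z)))%C = z.
Proof. intros Hz; rewrite Cexp_Clog_rhp by (apply Re_one_sub_pos, Hz); ring. Qed.

Lemma log_disk_Clog_rhp (z : C) : inD z -> log_disk (Clog_rhp (1 - z)).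
Proof.
  intros Hz; split; [apply atan_bound |].
  apply Cmod_one_sub_Cexp_lt_1; rewrite one_sub_Cexp_Clog_rhp; assumption.
Qed.

Lemma disk_injective_of_Re_one_sub_mul_deriv_pos (F F' : C -> C) :
  (forall z, inD z -> Cderiv_at F z (F' z)) ->
  (forall z, inD z -> 0 < Re ((1 - z) * F' z)) ->
  forall z1 z2, inD z1 -> inD z2 -> F z1 = F z2 -> z1 = z2.
Proof.
  intros HF Hpos z1 z2 Hz1 Hz2 Heq.
  destruct (Ceq_dec z1 z2) as [| Hne]; [assumption | exfalso].
  set (p1 := Clog_rhp (1 - z1)); set (p2 := Clog_rhp (1 - z2)); set (d := (p2 - p1)%C).
  set (g := fun s : R => (1 - Cexp (p1 + s * d))%C).
  assert (Hg0 : g 0 = z1).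
  { unfold g; replace (p1 + 0 * d)%C with p1 by ring; apply one_sub_Cexp_Clog_rhp, Hz1. }
  assert (Hg1 : g 1 = z2).
  { unfold g, d; replace (p1 + 1 * (p2 - p1))%C with p2 by ring.
    apply one_sub_Cexp_Clog_rhp, Hz2. }
  assert (Hgs : forall s, 0 <= s <= 1 -> inD (g s)).
  { intros s Hs; apply Cmod_one_sub_Cexp_lt_1.
    exact (proj2 (log_disk_convex p1 p2 s
                    (log_disk_Clog_rhp _ Hz1) (log_disk_Clog_rhp _ Hz2) Hs)). }
  assert (Hd : 0 < Cmod d).
  { apply Cmod_gt_0; intros Hd0; apply Hne; rewrite <- Hg0, <- Hg1; unfold g.
    rewrite Hd0; f_equal; f_equal; ring. }
  pose proof (Re_mul_lt_of_deriv_pos F F' g (fun s => - (Cexp (p1 + s * d) * d))%C (- Cconj d)%C)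
    as Hlt.
  rewrite Hg0, Hg1, Heq in Hlt; apply (Rlt_irrefl (Re (F z2 * - Cconj d))), Hlt.
  - intros s Hs; apply HF, Hgs, Hs.
  - intros s; apply is_derive_one_sub_Cexp_segment.
  - intros s Hs.
    replace (F' (g s) * - (Cexp (p1 + s * d) * d) * - Cconj d)%C
      with ((1 - g s) * F' (g s) * (d * Cconj d))%C by (unfold g; ring).
    rewrite <- Cmod2_conj, re_scal_r.
    apply Rmult_lt_0_compat; [apply Hpos, Hgs, Hs | apply pow_lt, Hd].
Qed.

(** * The hypergeometric coefficients *)

Lemma poch_pos x n : 0 < x -> 0 < poch x n.
Proof.
  intros Hx; induction n as [|n IH]; simpl; [lra|].
  pose proof (pos_INR n); apply Rmult_lt_0_compat; lra.
Qed.

Definition F32_coef (a b c d e : R) (n : nat) : R :=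
  poch a n * poch b n * poch c n / (poch d n * poch e n * INR (fact n)).

Definition zF32_deriv_coef (a b c d e : R) (n : nat) : R :=
  (INR n + 1) * F32_coef a b c d e n.

Lemma F32_coef_0 a b c d e : F32_coef a b c d e 0 = 1.
Proof. unfold F32_coef; simpl; field. Qed.

Lemma zF32_deriv_coef_0 a b c d e : zF32_deriv_coef a b c d e 0 = 1.
Proof. unfold zF32_deriv_coef; rewrite F32_coef_0; simpl; ring. Qed.

Lemma cubic_coef_ineq (a b c d e N : R) : 0 < a -> 0 < b -> 0 < c -> 0 <= N ->
  d * e >= 2 * a * b * c ->
  d + e >= a + b + c ->
  d + e >= (a * b + b * c + a * c + 2 * (a + b + c) - 1 - 2 * a * b * c) / 2 ->
  d + e >= 2 * (a * b + b * c + a * c) - 3 * a * b * c ->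
  (N + 2) * ((a + N) * (b + N) * (c + N)) <= (N + 1) ^ 2 * ((d + N) * (e + N)).
Proof.
  intros Ha Hb Hc HN H1 H2 H3 H4.
  (* The difference is a cubic in N whose coefficients are the four hypotheses. *)
  set (p := d + e); set (q := d * e).
  set (s1 := a + b + c); set (s2 := a * b + b * c + a * c); set (s3 := a * b * c).
  assert (E : (N + 1) ^ 2 * ((d + N) * (e + N)) - (N + 2) * ((a + N) * (b + N) * (c + N))
     = (p - s1) * N ^ 3 + (q + 2 * p + 1 - s2 - 2 * s1) * N ^ 2
       + (2 * q + p - s3 - 2 * s2) * N + (q - 2 * s3))
    by (unfold p, q, s1, s2, s3; ring).
  assert (0 <= p - s1) by (unfold p, s1; lra).
  assert (0 <= q + 2 * p + 1 - s2 - 2 * s1) by (unfold p, q, s1, s2; lra).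
  assert (0 <= 2 * q + p - s3 - 2 * s2) by (unfold p, q, s3, s2; lra).
  assert (0 <= q - 2 * s3) by (unfold q, s3; lra).
  assert (0 <= N ^ 2) by nra. assert (0 <= N ^ 3) by nra.
  nra.
Qed.

Section F32_coefficients.
Variables a b c d e : R.
Hypotheses (Ha : 0 < a) (Hb : 0 < b) (Hc : 0 < c) (Hd : 0 < d) (He : 0 < e)
  (H1 : d * e >= 2 * a * b * c) (H2 : d + e >= a + b + c)
  (H3 : d + e >= (a * b + b * c + a * c + 2 * (a + b + c) - 1 - 2 * a * b * c) / 2)
  (H4 : d + e >= 2 * (a * b + b * c + a * c) - 3 * a * b * c).

Lemma F32_coef_pos n : 0 < F32_coef a b c d e n.
Proof.
  unfold F32_coef; pose proof (INR_fact_lt_0 n).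
  pose proof (poch_pos a n Ha); pose proof (poch_pos b n Hb); pose proof (poch_pos c n Hc);
  pose proof (poch_pos d n Hd); pose proof (poch_pos e n He).
  apply Rdiv_lt_0_compat; repeat apply Rmult_lt_0_compat; auto.
Qed.

Lemma F32_coef_S n : F32_coef a b c d e (S n) = F32_coef a b c d e n *
  ((a + INR n) * (b + INR n) * (c + INR n) / ((d + INR n) * (e + INR n) * (INR n + 1))).
Proof.
  unfold F32_coef; simpl poch.
  rewrite fact_simpl, mult_INR, S_INR.
  pose proof (poch_pos d n Hd); pose proof (poch_pos e n He).
  pose proof (INR_fact_lt_0 n); pose proof (pos_INR n).
  field; repeat split; lra.
Qed.

Lemma zF32_deriv_coef_pos n : 0 < zF32_deriv_coef a b c d e n.
Proof.
  pose proof (F32_coef_pos n); pose proof (pos_INR n).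
  unfold zF32_deriv_coef; nra.
Qed.

Lemma zF32_deriv_coef_S_le n :
  (INR n + 2) * ((a + INR n) * (b + INR n) * (c + INR n))
    <= (INR n + 1) ^ 2 * ((d + INR n) * (e + INR n)) ->
  zF32_deriv_coef a b c d e (S n) <= zF32_deriv_coef a b c d e n.
Proof.
  intros Hratio; unfold zF32_deriv_coef.
  rewrite F32_coef_S, S_INR.
  pose proof (F32_coef_pos n); pose proof (pos_INR n).
  set (A := F32_coef a b c d e n) in *; set (N := INR n) in *.
  assert (HD : 0 < (d + N) * (e + N) * (N + 1)) by (repeat apply Rmult_lt_0_compat; lra).
  replace ((N + 1 + 1) * (A * ((a + N) * (b + N) * (c + N) / ((d + N) * (e + N) * (N + 1)))))
    with (A * ((N + 2) * ((a + N) * (b + N) * (c + N))) / ((d + N) * (e + N) * (N + 1)))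
    by (field; lra).
  apply Rle_div_l; [exact HD|].
  replace ((N + 1) * A * ((d + N) * (e + N) * (N + 1)))
    with (A * ((N + 1) ^ 2 * ((d + N) * (e + N)))) by ring.
  apply Rmult_le_compat_l; lra.
Qed.

Lemma zF32_deriv_coef_nonincreasing n :
  0 <= zF32_deriv_coef a b c d e (S n) <= zF32_deriv_coef a b c d e n.
Proof.
  split; [apply Rlt_le, zF32_deriv_coef_pos; assumption |].
  apply zF32_deriv_coef_S_le; auto.
  apply cubic_coef_ineq; auto using pos_INR.
Qed.

Lemma zF32_deriv_coef_bounds n : 0 <= zF32_deriv_coef a b c d e n <= 1.
Proof.
  apply nonincreasing_coef_bounds; [apply zF32_deriv_coef_0 | exact zF32_deriv_coef_nonincreasing].
Qed.

Lemma Rabs_F32_coef_le_1 n : Rabs (F32_coef a b c d e n) <= 1.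
Proof.
  pose proof (zF32_deriv_coef_bounds n); pose proof (F32_coef_pos n).
  pose proof (pos_INR n); unfold zF32_deriv_coef in *.
  rewrite Rabs_pos_eq by lra; nra.
Qed.

Lemma zF32_deriv (z : C) : inD z ->
  Cderiv_at (fun w => w * F32 a b c d e w)%C z (CPSeries (zF32_deriv_coef a b c d e) z).
Proof.
  intros Hz.
  apply (is_derive_ext_loc (CPSeries (coef_shift (F32_coef a b c d e)))).
  - apply (filter_imp inD); [| apply locally_disk, Hz].
    intros w Hw; symmetry; apply (Cmult_CPSeries _ 1); [exact Rabs_F32_coef_le_1 | exact Hw].
  - change (zF32_deriv_coef a b c d e) with (coef_deriv (coef_shift (F32_coef a b c d e))).
    apply (CPSeries_deriv _ 1); [| exact Hz].
    intros [| n]; simpl; [rewrite Rabs_R0; lra | apply Rabs_F32_coef_le_1].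
Qed.

Lemma Re_one_sub_mul_zF32_deriv_pos (z : C) : inD z ->
  0 < Re ((1 - z) * CPSeries (zF32_deriv_coef a b c d e) z).
Proof.
  intros Hz; unfold inD in Hz.
  eapply Rlt_le_trans; [| apply Re_one_sub_mul_CPSeries_ge]; auto.
  - lra.
  - apply zF32_deriv_coef_0.
  - apply zF32_deriv_coef_nonincreasing.
Qed.

Lemma zF32_deriv_at_0 : CPSeries (zF32_deriv_coef a b c d e) 0 = 1.
Proof.
  rewrite (CPSeries_at_0 _ 1), zF32_deriv_coef_0; [reflexivity |].
  intros n; pose proof (zF32_deriv_coef_bounds n); rewrite Rabs_pos_eq; lra.
Qed.

End F32_coefficients.

Lemma pos_of_mul_pos_add_pos (d e : R) : 0 < d * e -> 0 < d + e -> 0 < d /\ 0 < e.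
Proof. intros Hm Hs; destruct (Rlt_or_le 0 d); split; nra. Qed.

Theorem theorem2p1 (a b c d e : R) :
  0 < a -> 0 < b -> 0 < c ->
  (forall n : nat, d <> - INR n) -> (forall n : nat, e <> - INR n) ->
  d * e >= 2 * a * b * c ->
  d + e >= a + b + c ->
  d + e >= (a * b + b * c + a * c + 2 * (a + b + c) - 1 - 2 * a * b * c) / 2 ->
  d + e >= 2 * (a * b + b * c + a * c) - 3 * a * b * c ->
  close_to_convex_wrt (fun z => Cmult z (F32 a b c d e z)) neglog1m.
Proof.
  (* The excluded values of [d] and [e] play no role: [d e > 0] and [d + e > 0] force [d, e > 0]. *)
  intros Ha Hb Hc _ _ H1 H2 H3 H4.
  assert (Habc : 0 < a * b * c) by (repeat apply Rmult_lt_0_compat; assumption).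
  destruct (pos_of_mul_pos_add_pos d e) as [Hd He]; [lra | lra |].
  pose proof (zF32_deriv a b c d e Ha Hb Hc Hd He H1 H2 H3 H4) as Hf'.
  pose proof (Re_one_sub_mul_zF32_deriv_pos a b c d e Ha Hb Hc Hd He H1 H2 H3 H4) as Hpos.
  set (F' := CPSeries (zF32_deriv_coef a b c d e)) in *.
  split; [| split; [| split; [| split]]].
  - intros z Hz; exists (F' z); apply Hf', Hz.
  - apply Cmult_0_l.
  - rewrite <- (zF32_deriv_at_0 a b c d e) by assumption.
    apply Hf'; unfold inD; rewrite Cmod_0; lra.
  - apply (disk_injective_of_Re_one_sub_mul_deriv_pos _ F'); assumption.
  - intros z Hz f' g' Hf Hg.
    rewrite <- (is_C_derive_unique _ _ _ Hf), (is_C_derive_unique _ _ _ (Hf' z Hz)).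
    pose proof (Re_one_sub_pos z Hz) as HRe.
    rewrite <- (is_C_derive_unique _ _ _ Hg), (is_C_derive_unique _ _ _ (neglog1m_deriv z HRe)).
    assert (Hnz : (1 - z)%C <> 0%C) by (intros E; rewrite E, re_RtoC in HRe; lra).
    replace (Cdiv (F' z) (/ (1 - z))) with ((1 - z) * F' z)%C by (field; exact Hnz).
    apply Hpos, Hz.
Qed.
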